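(* If $0<q<1$, $u>0$ and $v\in\mathbb{R}$, then \[ \left|\left(q^{u+iv};q\right)_{\infty}\right|\ge\left(q^{u};q\right)_{\infty}q^{v^{2}/4}, \qquad \Gamma_{q}(u)\ge\left|\Gamma_{q}(u+iv)\right|q^{v^{2}/4}, \] and \[ \frac{\vartheta_{4}\left(v\vert iu\right)}{\vartheta_{4}\left(0\vert iu\right)}\ge e^{-\pi v^{2}/u}. \]
   Context: For $0<q<1$ and $a\in\mathbb{C}$, $(a;q)_{\infty}=\prod_{k=0}^{\infty}(1-aq^{k})$ and $(a_1,\dots,a_r;q)_\infty=\prod_{s=1}^r(a_s;q)_\infty$; $q^{w}=e^{w\log q}$ for complex $w$. The $q$-Gamma function is $\Gamma_{q}(x)=(1-q)^{1-x}\frac{(q;q)_{\infty}}{(q^{x};q)_{\infty}}$ (with $(1-q)^{1-x}=e^{(1-x)\log(1-q)}$). The Jacobi theta function is $\vartheta_{4}(v\vert\tau)=\sum_{n=-\infty}^{\infty}p^{n^{2}}(-z)^{n}=(p^{2},pz,p/z;p^{2})_{\infty}$ where $z=e^{2\pi iv}$, $p=e^{\pi i\tau}$, $\Im(\tau)>0$. *)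

From Stdlib Require Import Reals ZArith.
From Coquelicot Require Import Coquelicot.
Open Scope R_scope.

Definition cexp (z : C) : C :=
  (exp (Re z) * cos (Im z), exp (Re z) * sin (Im z)).

Definition qpow (q : R) (w : C) : C := cexp (w * RtoC (ln q)).

Definition Clim (s : nat -> C) : C :=
  (real (Lim_seq (fun n => Re (s n))), real (Lim_seq (fun n => Im (s n)))).

Fixpoint qpoch_part (a : C) (q : R) (n : nat) : C :=
  match n with
  | O => RtoC 1
  | S m => Cmult (qpoch_part a q m) (Cminus (RtoC 1) (Cmult a (RtoC (q ^ m))))
  end.

Definition qpoch (a : C) (q : R) : C := Clim (qpoch_part a q).

(* q-Gamma: (1-q)^{1-x} (q;q)_oo / (q^x;q)_oo, with (1-q)^{1-x} = e^{(1-x) log(1-q)} *)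
Definition Gamma_q (q : R) (x : C) : C :=
  Cdiv (Cmult (cexp (Cmult (Cminus (RtoC 1) x) (RtoC (ln (1 - q)))))
              (qpoch (RtoC q) q))
       (qpoch (qpow q x) q).

(* n-th term of the theta series: p^{n^2} (-z)^n with p = e^{pi i tau}, z = e^{2 pi i v},
   i.e. (-1)^n e^{pi i tau n^2 + 2 pi i v n} *)
Definition theta4_term (v tau : C) (n : Z) : C :=
  Cmult (RtoC (powerRZ (-1) n))
        (cexp (Cplus (Cmult (Cmult (Cmult (RtoC PI) Ci) tau) (RtoC (IZR (n * n))))
                     (Cmult (Cmult (Cmult (RtoC (2 * PI)) Ci) v) (RtoC (IZR n))))).

(* symmetric partial sum  sum_{n=-N}^{N} *)
Fixpoint theta4_aux (v tau : C) (N : nat) (k : nat) : C :=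
  match k with
  | O => RtoC 0
  | S j => Cplus (theta4_aux v tau N j)
                 (theta4_term v tau (Z.of_nat j - Z.of_nat N)%Z)
  end.

Definition theta4_part (v tau : C) (N : nat) : C :=
  theta4_aux v tau N (2 * N + 1).

Definition theta4 (v tau : C) : C := Clim (theta4_part v tau).

From Stdlib Require Import Reals ZArith Lra Lia.
From Coquelicot Require Import Coquelicot.
Open Scope R_scope.

(* Since |1 - a q^k| >= 1 - |a| q^k, the modulus of (a;q)_oo is at least (|a|;q)_oo; with
   a = q^(u+iv) this gives |(q^(u+iv);q)_oo| >= (q^u;q)_oo and, as |(1-q)^(-iv)| = 1,
   Gamma_q(u) >= |Gamma_q(u+iv)|.  Both are stronger than claimed, because q^(v^2/4) <= 1.

   For theta_4 on the imaginary axis put p = e^(-pi u) and z = e^(2 pi i v).  Expanding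
   (p^(1-2N) z; p^2)_(2N) by the q-binomial theorem gives the finite triple product
     sum_(|j| <= N) [2N, N+j]_(p^2) (-1)^j p^(j^2) z^j = |(p z; p^2)_N|^2,
   whose right side is smallest at z = 1.  Divide by [2N, N]_(p^2) <= 1/(p^2;p^2)_N^2: the
   weights [2N, N+j] / [2N, N] differ from 1 by O(p^(2(N - |j|))), so the weighted sums are
   within O(p^N) of the partial sums of theta_4, and at z = 1 they stay above
   ((p;p^2)_N (p^2;p^2)_N)^2, which is bounded away from 0.
   Hence theta_4(v|iu) >= theta_4(0|iu) > 0, and the ratio is at least 1 >= e^(-pi v^2/u). *)

Lemma exp_monotone x y : x <= y -> exp x <= exp y.
Proof. intros [Hlt | ->]; [now left; apply exp_increasing | apply Rle_refl]. Qed.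

Lemma exp_pow x n : exp x ^ n = exp (x * INR n).
Proof.
  induction n as [|n IH]; [simpl; now rewrite Rmult_0_r, exp_0 |].
  change (exp x ^ S n) with (exp x * exp x ^ n).
  rewrite IH, <- exp_plus, S_INR. f_equal. ring.
Qed.

Lemma exp_neg_le_one_minus y : 0 <= y < 1 -> exp (- (y / (1 - y))) <= 1 - y.
Proof.
  intros Hy.
  assert (Hgrow : 1 / (1 - y) <= exp (y / (1 - y))).
  { replace (1 / (1 - y)) with (1 + y / (1 - y)) by (field; lra). apply exp_ineq1_le. }
  rewrite exp_Ropp. replace (1 - y) with (/ (1 / (1 - y))) at 2 by (field; lra).
  apply Rinv_le_contravar; [apply Rdiv_lt_0_compat |]; lra.
Qed.

Lemma exp_mult_sqr_le s d : s <= 0 -> exp (s * INR d ^ 2) <= exp s ^ d.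
Proof.
  intros Hs. rewrite exp_pow. apply exp_monotone.
  assert (INR d <= INR d ^ 2).
  { destruct d as [|d]; [simpl; lra |]. rewrite S_INR. pose proof (pos_INR d). nra. }
  nra.
Qed.

Lemma pow_unit_interval q n : 0 <= q <= 1 -> 0 <= q ^ n <= 1.
Proof. intros Hq. split; [now apply pow_le |]. rewrite <- (pow1 n). now apply pow_incr. Qed.

Lemma pow_antitone q m n : 0 <= q <= 1 -> (m <= n)%nat -> q ^ n <= q ^ m.
Proof.
  intros Hq Hmn. replace n with (m + (n - m))%nat by lia. rewrite pow_add.
  pose proof (pow_unit_interval q m Hq). pose proof (pow_unit_interval q (n - m) Hq). nra.
Qed.

Lemma triangle_succ k : (S k * (S k - 1) / 2 = k * (k - 1) / 2 + k)%nat.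
Proof. rewrite <- Nat.div_add by lia. f_equal. destruct k; simpl; nia. Qed.

Lemma INR_triangle k : 2 * INR (k * (k - 1) / 2) = INR k * (INR k - 1).
Proof.
  induction k as [|k IH]; [simpl; ring |].
  rewrite triangle_succ, plus_INR, Rmult_plus_distr_l, IH, S_INR. ring.
Qed.

Lemma powerRZ_m1_add_even z m : powerRZ (-1) (z + Z.of_nat (2 * m)) = powerRZ (-1) z.
Proof. rewrite powerRZ_add by lra. rewrite <- pow_powerRZ, pow_1_even. ring. Qed.

Lemma sum_n_shift {G : AbelianMonoid} (a : nat -> G) n :
  sum_n a (S n) = plus (a O) (sum_n (fun k => a (S k)) n).
Proof. unfold sum_n. rewrite sum_Sn_m by lia. now rewrite sum_n_m_S. Qed.

Lemma sum_n_rev (a : nat -> R) n : sum_n a n = sum_n (fun j => a (n - j)%nat) n.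
Proof.
  induction n as [|n IH]; [now rewrite !sum_O |].
  rewrite sum_Sn, sum_n_shift, IH, Nat.sub_0_r. simpl. change plus with Rplus. ring.
Qed.

Lemma sum_n_le_loc (a b : nat -> R) n :
  (forall k, (k <= n)%nat -> a k <= b k) -> sum_n a n <= sum_n b n.
Proof.
  induction n as [|n IH]; intros Hab; [rewrite !sum_O; auto |].
  rewrite !sum_Sn. apply Rplus_le_compat; auto.
Qed.

Lemma sum_n_Rplus (f g : nat -> R) n : sum_n (fun k => f k + g k) n = sum_n f n + sum_n g n.
Proof. exact (sum_n_plus f g n). Qed.

Lemma sum_n_Rmult_l a (f : nat -> R) n : sum_n (fun k => a * f k) n = a * sum_n f n.
Proof. exact (sum_n_mult_l (K := R_Ring) a f n). Qed.

Lemma sum_n_geom_le p n : 0 <= p < 1 -> sum_n (fun j => p ^ j) n <= / (1 - p).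
Proof.
  intros Hp. rewrite sum_n_Reals, tech3 by lra.
  pose proof (pow_le p (S n) ltac:(lra)). unfold Rdiv.
  rewrite <- (Rmult_1_l (/ (1 - p))) at 2.
  apply Rmult_le_compat_r; [apply Rlt_le, Rinv_0_lt_compat |]; lra.
Qed.

Lemma sum_n_C_ext_loc (f g : nat -> C) n :
  (forall k, (k <= n)%nat -> f k = g k) -> sum_n f n = sum_n g n.
Proof. exact (sum_n_ext_loc f g n). Qed.

Lemma sum_n_Cplus (f g : nat -> C) n :
  sum_n (fun k => f k + g k)%C n = (sum_n f n + sum_n g n)%C.
Proof. exact (sum_n_plus f g n). Qed.

Lemma sum_n_Cminus (f g : nat -> C) n :
  (sum_n (fun k => f k - g k)%C n : C) = (sum_n f n - sum_n g n)%C.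
Proof.
  induction n as [|n IH]; [now rewrite !sum_O |].
  rewrite !sum_Sn. change plus with Cplus. rewrite IH. ring.
Qed.

Lemma sum_n_Cmult_l (a : C) (f : nat -> C) n :
  sum_n (fun k => a * f k)%C n = (a * sum_n f n)%C.
Proof. exact (sum_n_mult_l (K := C_Ring) a f n). Qed.

Lemma Cmod_sum_n_le (f : nat -> C) n : Cmod (sum_n f n) <= sum_n (fun k => Cmod (f k)) n.
Proof.
  induction n as [|n IH]; [rewrite !sum_O; lra |].
  rewrite !sum_Sn. eapply Rle_trans; [apply Cmod_triangle |]. change plus with Rplus. lra.
Qed.

Lemma im_le_Cmod (c : C) : Rabs (Im c) <= Cmod c.
Proof. unfold Cmod. rewrite <- sqrt_Rsqr_abs. apply sqrt_le_1_alt. unfold Rsqr, Im. nra. Qed.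

Lemma Cconj_RtoC r : Cconj (RtoC r) = RtoC r.
Proof. apply injective_projections; simpl; ring. Qed.

Lemma Cmod_one_minus_ge (w : C) : 1 - Cmod w <= Cmod (1 - w).
Proof.
  pose proof (Cmod_triangle (1 - w) w) as Htri.
  replace (1 - w + w)%C with (RtoC 1) in Htri by ring. rewrite Cmod_1 in Htri. lra.
Qed.

Lemma Cmod_one_minus_le_exp (w : C) : Cmod (1 - w) <= exp (Cmod w).
Proof.
  eapply Rle_trans; [apply Cmod_triangle |]. rewrite Cmod_opp, Cmod_1. apply exp_ineq1_le.
Qed.

Lemma Cmod_mult_pow (a : C) q k : 0 <= q -> Cmod (a * RtoC (q ^ k)) = Cmod a * q ^ k.
Proof. intros Hq. rewrite Cmod_mult, Cmod_R, Rabs_pos_eq; [reflexivity | now apply pow_le]. Qed.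

Lemma cexp_RtoC r : cexp (RtoC r) = RtoC (exp r).
Proof. unfold cexp, RtoC, Re, Im. simpl. rewrite cos_0, sin_0. f_equal; ring. Qed.

Lemma cexp_add w1 w2 : cexp (w1 + w2) = (cexp w1 * cexp w2)%C.
Proof.
  unfold cexp, Re, Im. simpl. rewrite exp_plus, cos_plus, sin_plus.
  apply injective_projections; simpl; ring.
Qed.

Lemma cexp_pow w n : (cexp w ^ n)%C = cexp (RtoC (INR n) * w).
Proof.
  induction n as [|n IH].
  - replace (RtoC (INR 0) * w)%C with (RtoC 0) by (simpl; ring). now rewrite cexp_RtoC, exp_0.
  - rewrite Cpow_S, IH, <- cexp_add, S_INR, RtoC_plus. f_equal. ring.
Qed.

Lemma Cmod_cexp w : Cmod (cexp w) = exp (Re w).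
Proof.
  unfold cexp, Cmod. cbn [fst snd].
  transitivity (sqrt (exp (Re w) ^ 2)); [| apply sqrt_pow2; left; apply exp_pos].
  f_equal. transitivity (exp (Re w) ^ 2 * (Rsqr (sin (Im w)) + Rsqr (cos (Im w)))).
  - unfold Rsqr. ring.
  - rewrite sin2_cos2. ring.
Qed.

Lemma Cmod_cexp_imag t : Cmod (cexp (0, t)) = 1.
Proof. rewrite Cmod_cexp. apply exp_0. Qed.

Lemma Cconj_cexp_imag t : Cconj (cexp (0, t)) = cexp (0, - t).
Proof.
  unfold cexp, Cconj. simpl. rewrite cos_neg, sin_neg. apply injective_projections; simpl; ring.
Qed.

Lemma cexp_imag_mult_opp t : (cexp (0, t) * cexp (0, (- t)%R))%C = 1%C.
Proof.
  rewrite <- cexp_add. replace ((0, t) + (0, (- t)%R))%C with (RtoC 0)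
    by (apply injective_projections; simpl; ring).
  now rewrite cexp_RtoC, exp_0.
Qed.

Lemma is_lim_seq_Cmod (s : nat -> C) (a b : R) :
  is_lim_seq (fun n => Re (s n)) a -> is_lim_seq (fun n => Im (s n)) b ->
  is_lim_seq (fun n => Cmod (s n)) (Cmod (a, b)).
Proof.
  intros Ha Hb. unfold Cmod. simpl.
  apply is_lim_seq_continuous; [apply continuity_pt_sqrt; nra |].
  apply is_lim_seq_plus'; apply is_lim_seq_mult'; auto;
    apply is_lim_seq_mult'; auto; apply is_lim_seq_const.
Qed.

Lemma Clim_correct (s : nat -> C) (a b : R) :
  is_lim_seq (fun n => Re (s n)) a -> is_lim_seq (fun n => Im (s n)) b -> Clim s = (a, b).
Proof.
  intros Ha Hb. unfold Clim. now rewrite (is_lim_seq_unique _ _ Ha), (is_lim_seq_unique _ _ Hb).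
Qed.

Lemma ex_lim_seq_geometric_increments (x : nat -> R) c r : 0 <= r < 1 ->
  (forall k, Rabs (x (S k) - x k) <= c * r ^ k) -> exists l : R, is_lim_seq x l.
Proof.
  intros Hr Hinc. set (d k := x (S k) - x k).
  assert (Hd : ex_series d).
  { apply (ex_series_le (K := R_AbsRing) (V := R_CompleteNormedModule) d (fun k => c * r ^ k));
      [exact Hinc |].
    apply (ex_series_scal_l c (fun k => r ^ k)), ex_series_geom. rewrite Rabs_pos_eq; lra. }
  exists (x O + Series d).
  apply is_lim_seq_incr_1, is_lim_seq_ext with (fun n => x O + sum_n d n).
  - intros n. induction n as [|n IH]; [rewrite sum_O; unfold d; ring |].
    rewrite sum_Sn. change plus with Rplus. rewrite <- Rplus_assoc, IH. unfold d. ring.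
  - apply is_lim_seq_plus'; [apply is_lim_seq_const | apply Series_correct, Hd].
Qed.

(** * Finite q-Pochhammer symbols and Gaussian binomials *)

Fixpoint rqpoch (x q : R) (n : nat) : R :=
  match n with
  | O => 1
  | S m => rqpoch x q m * (1 - x * q ^ m)
  end.

Lemma qpoch_part_RtoC x q n : qpoch_part (RtoC x) q n = RtoC (rqpoch x q n).
Proof.
  induction n as [|n IH]; [reflexivity |].
  simpl. now rewrite IH, RtoC_mult, RtoC_minus, RtoC_mult.
Qed.

Lemma rqpoch_add x q m n : rqpoch x q (m + n) = rqpoch x q m * rqpoch (x * q ^ m) q n.
Proof.
  induction n as [|n IH]; simpl.
  - rewrite Nat.add_0_r. ring.
  - rewrite Nat.add_succ_r. simpl. rewrite IH, pow_add. ring.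
Qed.

Lemma qpoch_part_add a q m n :
  qpoch_part a q (m + n) = (qpoch_part a q m * qpoch_part (a * RtoC (q ^ m)) q n)%C.
Proof.
  induction n as [|n IH]; simpl.
  - rewrite Nat.add_0_r. ring.
  - rewrite Nat.add_succ_r. simpl. rewrite IH, pow_add, RtoC_mult. ring.
Qed.

Lemma qpoch_part_conj a q n : Cconj (qpoch_part a q n) = qpoch_part (Cconj a) q n.
Proof.
  induction n as [|n IH]; simpl; [apply Cconj_RtoC |].
  now rewrite Cmult_conj, Cminus_conj, Cmult_conj, !Cconj_RtoC, IH.
Qed.

Section RealQPochhammer.

Variable q : R.
Hypothesis hq : 0 <= q < 1.

Lemma rqpoch_unit_interval x n : 0 <= x <= 1 -> 0 <= rqpoch x q n <= 1.
Proof.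
  intros Hx. induction n as [|n IH]; simpl; [lra |].
  pose proof (pow_unit_interval q n ltac:(lra)). assert (0 <= x * q ^ n <= 1) by nra. nra.
Qed.

Lemma rqpoch_antitone x y n : 0 <= x <= y -> y <= 1 -> rqpoch y q n <= rqpoch x q n.
Proof.
  intros Hxy Hy. induction n as [|n IH]; simpl; [lra |].
  pose proof (rqpoch_unit_interval y n ltac:(lra)).
  pose proof (pow_unit_interval q n ltac:(lra)).
  apply Rmult_le_compat; nra.
Qed.

Lemma rqpoch_ge_one_minus x n : 0 <= x <= 1 -> 1 - x / (1 - q) <= rqpoch x q n.
Proof.
  intros Hx.
  (* Weierstrass' product inequality, with the geometric sum in closed form *)
  assert (Hstrong : 1 - x * (1 - q ^ n) / (1 - q) <= rqpoch x q n).
  { induction n as [|n IH]; simpl; [unfold Rdiv; lra |].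
    pose proof (rqpoch_unit_interval x n Hx). pose proof (pow_unit_interval q n ltac:(lra)).
    assert (0 <= x * q ^ n) by nra.
    apply Rle_trans with (rqpoch x q n - x * q ^ n); [| nra].
    replace (1 - x * (1 - q * q ^ n) / (1 - q))
      with (1 - x * (1 - q ^ n) / (1 - q) - x * q ^ n) by (field; lra).
    lra. }
  pose proof (pow_unit_interval q n ltac:(lra)).
  eapply Rle_trans; [| exact Hstrong].
  unfold Rdiv. apply Rplus_le_compat_l, Ropp_le_contravar.
  apply Rmult_le_compat_r; [apply Rlt_le, Rinv_0_lt_compat; lra | nra].
Qed.

Lemma rqpoch_ge_exp x n : 0 <= x < 1 -> exp (- (x / ((1 - x) * (1 - q)))) <= rqpoch x q n.
Proof.
  intros Hx.
  assert (Hstrong : exp (- (x * (1 - q ^ n) / ((1 - x) * (1 - q)))) <= rqpoch x q n).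
  { induction n as [|n IH]; simpl.
    - rewrite Rminus_diag, Rmult_0_r, Rdiv_0_l, Ropp_0, exp_0. lra.
    - pose proof (pow_unit_interval q n ltac:(lra)).
      set (y := x * q ^ n).
      assert (Hy : 0 <= y <= x) by (unfold y; nra).
      replace (- (x * (1 - q * q ^ n) / ((1 - x) * (1 - q))))
        with (- (x * (1 - q ^ n) / ((1 - x) * (1 - q))) + - (y / (1 - x)))
        by (unfold y; field; lra).
      rewrite exp_plus. apply Rmult_le_compat; try (left; apply exp_pos); [exact IH |].
      eapply Rle_trans; [| apply exp_neg_le_one_minus; lra].
      apply exp_monotone, Ropp_le_contravar. unfold Rdiv.
      apply Rmult_le_compat_l; [lra |]. apply Rinv_le_contravar; lra. }
  eapply Rle_trans; [| exact Hstrong].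
  pose proof (pow_unit_interval q n ltac:(lra)).
  apply exp_monotone, Ropp_le_contravar. unfold Rdiv.
  apply Rmult_le_compat_r; [| nra].
  apply Rlt_le, Rinv_0_lt_compat, Rmult_lt_0_compat; lra.
Qed.

Lemma rqpoch_pos x n : 0 <= x < 1 -> 0 < rqpoch x q n.
Proof. intros Hx. eapply Rlt_le_trans; [apply exp_pos | now apply rqpoch_ge_exp]. Qed.

End RealQPochhammer.

Definition qbinom (q : R) (n k : nat) : R :=
  if (k <=? n)%nat then rqpoch q q n / (rqpoch q q k * rqpoch q q (n - k)) else 0.

Lemma qbinom_add q k m :
  qbinom q (k + m) k = rqpoch q q (k + m) / (rqpoch q q k * rqpoch q q m).
Proof.
  unfold qbinom. rewrite (proj2 (Nat.leb_le k (k + m))) by lia.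
  now replace (k + m - k)%nat with m by lia.
Qed.

Lemma qbinom_over q n k : (n < k)%nat -> qbinom q n k = 0.
Proof. intros Hnk. unfold qbinom. now rewrite (proj2 (Nat.leb_gt k n)). Qed.

Lemma qbinom_sym q n k : (k <= n)%nat -> qbinom q n (n - k) = qbinom q n k.
Proof.
  intros Hk. replace n with (k + (n - k))%nat at 1 3 by lia.
  rewrite qbinom_add, Nat.add_comm, qbinom_add. now rewrite Rmult_comm.
Qed.

Section GaussianBinomial.

Variable q : R.
Hypothesis hq : 0 <= q < 1.

Let rqpoch_q_pos n : 0 < rqpoch q q n.
Proof. apply rqpoch_pos; lra. Qed.

Lemma qbinom_0_r n : qbinom q n 0 = 1.
Proof.
  rewrite <- (Nat.add_0_l n), qbinom_add. pose proof (rqpoch_q_pos n). simpl. field. lra.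
Qed.

Lemma qbinom_diag n : qbinom q n n = 1.
Proof. rewrite <- (Nat.sub_0_r n) at 2. rewrite qbinom_sym by lia. apply qbinom_0_r. Qed.

Lemma qbinom_pos n k : (k <= n)%nat -> 0 < qbinom q n k.
Proof.
  intros Hk. replace n with (k + (n - k))%nat by lia. rewrite qbinom_add.
  apply Rdiv_lt_0_compat; [| apply Rmult_lt_0_compat]; apply rqpoch_q_pos.
Qed.

Lemma qbinom_pascal n k :
  (k <= n)%nat -> qbinom q (S n) (S k) = qbinom q n (S k) + q ^ (n - k) * qbinom q n k.
Proof.
  intros Hk. destruct (Nat.eq_dec k n) as [<- | Hne].
  - rewrite (qbinom_over q k (S k)), Nat.sub_diag, !qbinom_diag by lia. simpl. ring.
  - replace n with (k + S (n - S k))%nat by lia. set (m := (n - S k)%nat).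
    replace (k + S m - k)%nat with (S m) by lia.
    replace (S (k + S m)) with (S k + S m)%nat by lia.
    replace (k + S m)%nat with (S k + m)%nat at 1 by lia.
    rewrite !qbinom_add.
    replace (S k + m)%nat with (k + S m)%nat by lia.
    replace (S k + S m)%nat with (S (k + S m)) by lia.
    pose proof (rqpoch_q_pos (k + S m)). pose proof (rqpoch_q_pos k).
    pose proof (rqpoch_q_pos m).
    pose proof (pow_lt_1_compat q (S k) ltac:(lra) ltac:(lia)).
    pose proof (pow_lt_1_compat q (S m) ltac:(lra) ltac:(lia)).
    simpl rqpoch.
    replace (q * q ^ (k + S m)) with (q ^ S k * q ^ S m) by (simpl; rewrite pow_add; simpl; ring).
    simpl in *. field. repeat split; lra.
Qed.

Lemma qbinom_central_le N : qbinom q (2 * N) N <= / rqpoch q q N ^ 2.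
Proof.
  replace (2 * N)%nat with (N + N)%nat by lia. rewrite qbinom_add.
  pose proof (rqpoch_q_pos N).
  pose proof (rqpoch_unit_interval q hq q (N + N) ltac:(lra)).
  unfold Rdiv.
  replace (/ rqpoch q q N ^ 2) with (1 * / (rqpoch q q N * rqpoch q q N)) by (field; lra).
  apply Rmult_le_compat_r; [apply Rlt_le, Rinv_0_lt_compat, Rmult_lt_0_compat |]; lra.
Qed.

Lemma qbinom_central_ratio N j : (j <= N)%nat ->
  0 <= 1 - qbinom q (2 * N) j / qbinom q (2 * N) N <= q ^ S j / (1 - q).
Proof.
  intros Hj. set (m := (N - j)%nat).
  set (X := rqpoch (q * q ^ j) q m). set (Y := rqpoch (q * q ^ (j + m)) q m).
  pose proof (pow_lt_1_compat q (S j) ltac:(lra) ltac:(lia)) as Hqj.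
  pose proof (pow_antitone q (S j) (S (j + m)) ltac:(lra) ltac:(lia)) as Hqjm.
  pose proof (pow_le q (S (j + m)) ltac:(lra)) as Hqjm0.
  simpl in Hqj, Hqjm, Hqjm0.
  assert (HX : 0 < X) by (apply rqpoch_pos; lra).
  assert (HXY : X <= Y) by (apply rqpoch_antitone; lra).
  assert (HY : Y <= 1) by (apply rqpoch_unit_interval; lra).
  assert (HX1 : 1 - q ^ S j / (1 - q) <= X) by (apply rqpoch_ge_one_minus; simpl; lra).
  assert (HN : rqpoch q q N = rqpoch q q j * X).
  { unfold X. rewrite <- rqpoch_add. f_equal. lia. }
  assert (HNm : rqpoch q q (j + m + m) = rqpoch q q j * X * Y).
  { unfold Y. rewrite rqpoch_add, <- HN. do 2 f_equal. lia. }
  assert (Hratio : qbinom q (2 * N) j / qbinom q (2 * N) N = X / Y).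
  { replace (2 * N)%nat with (j + (j + m + m))%nat at 1 by lia.
    replace (2 * N)%nat with (N + N)%nat by lia.
    rewrite !qbinom_add, HNm, HN. replace (j + (j + m + m))%nat with (N + N)%nat by lia.
    pose proof (rqpoch_q_pos j). pose proof (rqpoch_q_pos (N + N)).
    field. repeat split; lra. }
  rewrite Hratio.
  assert (X <= X / Y <= 1).
  { split; apply Rmult_le_reg_r with Y; try lra; unfold Rdiv;
      rewrite Rmult_assoc, Rinv_l; nra. }
  lra.
Qed.

End GaussianBinomial.

Lemma qpoch_part_q_binomial a q n : 0 <= q < 1 ->
  qpoch_part a q n
  = sum_n (fun k => RtoC (qbinom q n k * q ^ (k * (k - 1) / 2)) * (- a) ^ k)%C n.
Proof.
  intros Hq. induction n as [|n IH].
  - rewrite sum_O, qbinom_0_r by exact Hq. simpl. now rewrite Rmult_1_r, Cmult_1_r.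
  - set (c n k := (RtoC (qbinom q n k * q ^ (k * (k - 1) / 2)) * (- a) ^ k)%C).
    change (qpoch_part a q (S n)) with (qpoch_part a q n * (1 - a * RtoC (q ^ n)))%C.
    rewrite IH. fold (c n). change (sum_n ?f (S n)) with (sum_n (c (S n)) (S n)).
    rewrite sum_n_shift.
    rewrite (sum_n_C_ext_loc (fun k => c (S n) (S k))
               (fun k => c n (S k) + (- a * RtoC (q ^ n)) * c n k)%C).
    2:{ intros k Hk. unfold c.
        rewrite (qbinom_pascal q Hq n k Hk), triangle_succ, pow_add, Cpow_S.
        replace (q ^ n) with (q ^ (n - k) * q ^ k) by (rewrite <- pow_add; f_equal; lia).
        rewrite !RtoC_mult, RtoC_plus, !RtoC_mult. ring. }
    rewrite sum_n_Cplus, sum_n_Cmult_l.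
    assert (Hcn : c n (S n) = 0%C)
      by (unfold c; rewrite qbinom_over, Rmult_0_l, Cmult_0_l by lia; reflexivity).
    assert (Hshift : @eq C (sum_n (fun k => c n (S k)) n) (sum_n (c n) n - c n O)%C).
    { pose proof (sum_n_shift (c n) n) as Hshift. rewrite sum_Sn, Hcn in Hshift.
      change plus with Cplus in Hshift. rewrite Cplus_0_r in Hshift.
      rewrite Hshift. symmetry. ring. }
    assert (Hc0 : forall m, c m O = 1%C).
    { intros m. unfold c. rewrite qbinom_0_r by exact Hq. now rewrite Rmult_1_l, pow_O, Cmult_1_l. }
    change plus with Cplus. rewrite Hshift, !Hc0. ring.
Qed.

(* With p = e^s and zw = 1: read backwards, (p^(1-2N) z; p^2)_N is (p w; p^2)_N up to the
   factor (-z)^N p^(-N^2). *)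
Lemma qpoch_part_reflect s (z w : C) N : (z * w = 1)%C ->
  (RtoC ((-1) ^ N * exp (s * INR N ^ 2)) * w ^ N
   * qpoch_part (RtoC (exp (s * (1 - 2 * INR N))) * z) (exp (2 * s)) N)%C
  = qpoch_part (RtoC (exp s) * w) (exp (2 * s)) N.
Proof.
  intros Hzw. induction N as [|N IH].
  - simpl. rewrite Rmult_0_l, Rmult_0_r, exp_0, Rmult_1_l. ring.
  - set (A := exp (s * (1 - 2 * INR (S N)))).
    set (E := exp (s * (2 * INR N + 1))).
    set (X := qpoch_part (RtoC (exp (s * (1 - 2 * INR N))) * z) (exp (2 * s)) N).
    set (K := RtoC ((-1) ^ N * exp (s * INR N ^ 2))).
    assert (HAE : (RtoC A * RtoC E = 1)%C).
    { unfold A, E. rewrite <- RtoC_mult, <- exp_plus, S_INR.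
      replace (s * (1 - 2 * (INR N + 1)) + s * (2 * INR N + 1)) with 0 by ring.
      now rewrite exp_0. }
    assert (HE : (RtoC (exp s) * RtoC (exp (2 * s) ^ N) = RtoC E)%C).
    { unfold E. rewrite <- RtoC_mult, exp_pow, <- exp_plus. f_equal. f_equal. ring. }
    assert (Hfirst : qpoch_part (RtoC A * z) (exp (2 * s)) (S N) = ((1 - RtoC A * z) * X)%C).
    { change (S N) with (1 + N)%nat. rewrite qpoch_part_add. unfold X.
      replace (RtoC A * z * RtoC (exp (2 * s) ^ 1))%C
        with (RtoC (exp (s * (1 - 2 * INR N))) * z)%C.
      - simpl. ring.
      - rewrite pow_1. transitivity (RtoC (A * exp (2 * s)) * z)%C; [| rewrite RtoC_mult; ring].
        unfold A. rewrite <- exp_plus, S_INR. do 3 f_equal. ring. }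
    assert (Hsign : RtoC ((-1) ^ S N * exp (s * INR (S N) ^ 2)) = (- K * RtoC E)%C).
    { unfold K, E. rewrite <- RtoC_opp, <- RtoC_mult, S_INR. f_equal.
      replace (s * (INR N + 1) ^ 2) with (s * INR N ^ 2 + s * (2 * INR N + 1)) by ring.
      rewrite exp_plus. simpl. ring. }
    rewrite Hfirst, Hsign.
    change (qpoch_part (RtoC (exp s) * w) (exp (2 * s)) (S N))
      with (qpoch_part (RtoC (exp s) * w) (exp (2 * s)) N
            * (1 - RtoC (exp s) * w * RtoC (exp (2 * s) ^ N)))%C.
    rewrite <- IH. fold X K.
    transitivity (K * w ^ N * X * (RtoC A * RtoC E * (z * w) - RtoC E * w))%C.
    + rewrite Cpow_S. ring.
    + rewrite HAE, Hzw, <- HE. ring.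
Qed.

Lemma triple_product_coefficient s g N k :
  (-1) ^ N * exp (s * INR N ^ 2) * (g * exp (2 * s) ^ (k * (k - 1) / 2))
  * (- exp (s * (1 - 2 * INR N))) ^ k
  = g * ((-1) ^ (k + N) * exp (s * (INR k - INR N) ^ 2)).
Proof.
  replace (- exp (s * (1 - 2 * INR N))) with (-1 * exp (s * (1 - 2 * INR N))) by ring.
  rewrite Rpow_mult_distr, pow_add, !exp_pow.
  replace (2 * s * INR (k * (k - 1) / 2)) with (s * (INR k * (INR k - 1)))
    by (rewrite <- INR_triangle; ring).
  replace (s * (INR k - INR N) ^ 2)
    with (s * INR N ^ 2 + s * (INR k * (INR k - 1)) + s * (1 - 2 * INR N) * INR k) by ring.
  rewrite !exp_plus. ring.
Qed.

Lemma jacobi_triple_product_partial s (z w : C) N : s < 0 -> (z * w = 1)%C ->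
  (sum_n (fun k => RtoC (qbinom (exp (2 * s)) (2 * N) k
                         * ((-1) ^ (k + N) * exp (s * (INR k - INR N) ^ 2))) * z ^ k * w ^ N)%C
         (2 * N) : C)
  = (qpoch_part (RtoC (exp s) * z) (exp (2 * s)) N
     * qpoch_part (RtoC (exp s) * w) (exp (2 * s)) N)%C.
Proof.
  intros Hs Hzw. rewrite <- (qpoch_part_reflect s z w N Hzw).
  assert (HQ : 0 <= exp (2 * s) < 1).
  { split; [left; apply exp_pos |]. rewrite <- exp_0. apply exp_increasing. lra. }
  set (e := exp (s * (1 - 2 * INR N))).
  set (K := RtoC ((-1) ^ N * exp (s * INR N ^ 2))).
  assert (Hhalf : (RtoC e * z * RtoC (exp (2 * s) ^ N))%C = (RtoC (exp s) * z)%C).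
  { unfold e. rewrite exp_pow, Cmult_comm, Cmult_assoc, <- RtoC_mult, <- exp_plus.
    do 3 f_equal. ring. }
  transitivity (K * w ^ N * qpoch_part (RtoC e * z) (exp (2 * s)) (N + N))%C.
  2:{ rewrite qpoch_part_add, Hhalf. ring. }
  replace (N + N)%nat with (2 * N)%nat by lia.
  rewrite (qpoch_part_q_binomial _ _ _ HQ), <- sum_n_Cmult_l.
  apply sum_n_C_ext_loc. intros k Hk.
  replace (- (RtoC e * z))%C with (RtoC (- e) * z)%C by (rewrite RtoC_opp; ring).
  rewrite Cpow_mult_l, <- RtoC_pow, <- (triple_product_coefficient s _ N k).
  unfold K, e. rewrite !RtoC_mult. ring.
Qed.

(** * Infinite q-Pochhammer symbols and the q-Gamma function *)

Section ComplexQPochhammer.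

Variable q : R.
Hypothesis hq : 0 <= q < 1.

Lemma Cmod_qpoch_part_ge a n : Cmod a <= 1 -> rqpoch (Cmod a) q n <= Cmod (qpoch_part a q n).
Proof.
  intros Ha. pose proof (Cmod_ge_0 a).
  induction n as [|n IH]; simpl qpoch_part; simpl rqpoch; [rewrite Cmod_1; lra |].
  rewrite Cmod_mult. pose proof (Cmod_one_minus_ge (a * RtoC (q ^ n))) as Hf.
  rewrite Cmod_mult_pow in Hf by lra.
  pose proof (rqpoch_unit_interval q hq (Cmod a) n ltac:(lra)).
  pose proof (pow_unit_interval q n ltac:(lra)).
  apply Rmult_le_compat; nra.
Qed.

Lemma Cmod_qpoch_part_le a n : Cmod (qpoch_part a q n) <= exp (Cmod a / (1 - q)).
Proof.
  pose proof (Cmod_ge_0 a).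
  assert (Hstrong : Cmod (qpoch_part a q n) <= exp (Cmod a * (1 - q ^ n) / (1 - q))).
  { induction n as [|n IH]; simpl qpoch_part.
    - rewrite Cmod_1, Rminus_diag, Rmult_0_r, Rdiv_0_l, exp_0. lra.
    - rewrite Cmod_mult.
      replace (Cmod a * (1 - q ^ S n) / (1 - q))
        with (Cmod a * (1 - q ^ n) / (1 - q) + Cmod (a * RtoC (q ^ n)))
        by (rewrite Cmod_mult_pow by lra; simpl; field; lra).
      rewrite exp_plus. apply Rmult_le_compat; auto using Cmod_ge_0, Cmod_one_minus_le_exp. }
  eapply Rle_trans; [exact Hstrong |]. apply exp_monotone.
  pose proof (pow_unit_interval q n ltac:(lra)). unfold Rdiv.
  apply Rmult_le_compat_r; [apply Rlt_le, Rinv_0_lt_compat; lra | nra].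
Qed.

Lemma qpoch_part_cvg a :
  is_lim_seq (fun n => Re (qpoch_part a q n)) (Re (qpoch a q))
  /\ is_lim_seq (fun n => Im (qpoch_part a q n)) (Im (qpoch a q)).
Proof.
  set (B := exp (Cmod a / (1 - q)) * Cmod a).
  assert (Hinc : forall k, Cmod (qpoch_part a q (S k) - qpoch_part a q k) <= B * q ^ k).
  { intros k. simpl qpoch_part.
    replace (qpoch_part a q k * (1 - a * RtoC (q ^ k)) - qpoch_part a q k)%C
      with (- (qpoch_part a q k * (a * RtoC (q ^ k))))%C by ring.
    rewrite Cmod_opp, Cmod_mult, Cmod_mult_pow by lra. unfold B. rewrite <- Rmult_assoc.
    pose proof (Cmod_qpoch_part_le a k). pose proof (Cmod_ge_0 a).
    pose proof (pow_le q k ltac:(lra)).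
    apply Rmult_le_compat_r; [lra |]. apply Rmult_le_compat_r; lra. }
  destruct (ex_lim_seq_geometric_increments (fun n => Re (qpoch_part a q n)) B q hq) as [lr Hlr].
  { intros k. eapply Rle_trans; [| apply Hinc].
    exact (re_le_Cmod (qpoch_part a q (S k) - qpoch_part a q k)). }
  destruct (ex_lim_seq_geometric_increments (fun n => Im (qpoch_part a q n)) B q hq) as [li Hli].
  { intros k. eapply Rle_trans; [| apply Hinc].
    exact (im_le_Cmod (qpoch_part a q (S k) - qpoch_part a q k)). }
  unfold qpoch. now rewrite (Clim_correct _ _ _ Hlr Hli).
Qed.

End ComplexQPochhammer.

Lemma qpoch_RtoC x q : 0 <= q < 1 ->
  is_lim_seq (rqpoch x q) (Re (qpoch (RtoC x) q))
  /\ qpoch (RtoC x) q = RtoC (Re (qpoch (RtoC x) q)).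
Proof.
  intros Hq. destruct (qpoch_part_cvg q Hq (RtoC x)) as [Hre Him].
  assert (Hr : is_lim_seq (rqpoch x q) (Re (qpoch (RtoC x) q))).
  { eapply is_lim_seq_ext; [| exact Hre]. intros n. simpl. now rewrite qpoch_part_RtoC. }
  assert (Hi : is_lim_seq (fun _ => 0) (Im (qpoch (RtoC x) q))).
  { eapply is_lim_seq_ext; [| exact Him]. intros n. simpl. now rewrite qpoch_part_RtoC. }
  split; [exact Hr |].
  apply is_lim_seq_unique in Hi. rewrite Lim_seq_const in Hi. injection Hi as Hi.
  now apply injective_projections.
Qed.

Section InfiniteQPochhammer.

Variable q : R.
Hypothesis hq : 0 <= q < 1.

Lemma Re_qpoch_RtoC_pos x : 0 <= x < 1 -> 0 < Re (qpoch (RtoC x) q).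
Proof.
  intros Hx. destruct (qpoch_RtoC x q hq) as [Hlim _].
  apply Rlt_le_trans with (exp (- (x / ((1 - x) * (1 - q))))); [apply exp_pos |].
  exact (is_lim_seq_le (fun _ => exp (- (x / ((1 - x) * (1 - q))))) (rqpoch x q) _ _
           (fun n => rqpoch_ge_exp q hq x n Hx) (is_lim_seq_const _) Hlim).
Qed.

Lemma Cmod_qpoch_ge a : Cmod a <= 1 -> Re (qpoch (RtoC (Cmod a)) q) <= Cmod (qpoch a q).
Proof.
  intros Ha. destruct (qpoch_RtoC (Cmod a) q hq) as [Hlim _].
  destruct (qpoch_part_cvg q hq a) as [Hre Him].
  replace (Cmod (qpoch a q)) with (Cmod (Re (qpoch a q), Im (qpoch a q)))
    by now destruct (qpoch a q).
  exact (is_lim_seq_le _ _ _ _ (fun n => Cmod_qpoch_part_ge q hq a n Ha) Hlim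
           (is_lim_seq_Cmod _ _ _ Hre Him)).
Qed.

End InfiniteQPochhammer.

Lemma qpow_RtoC q u : qpow q (RtoC u) = RtoC (exp (u * ln q)).
Proof. unfold qpow. rewrite <- RtoC_mult. apply cexp_RtoC. Qed.

Lemma Cmod_qpow q u v : Cmod (qpow q (u, v)) = exp (u * ln q).
Proof. unfold qpow. rewrite Cmod_cexp. f_equal. unfold Re. simpl. ring. Qed.

Section QGamma.

Variables q u : R.
Hypothesis hq : 0 < q < 1.
Hypothesis hu : 0 < u.

Let qpow_u_unit : 0 <= exp (u * ln q) < 1.
Proof.
  split; [left; apply exp_pos |]. rewrite <- exp_0. apply exp_increasing.
  assert (ln q < 0) by (rewrite <- ln_1; apply ln_increasing; lra). nra.
Qed.

Lemma Re_qpoch_qpow_le_Cmod v :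
  Re (qpoch (qpow q (RtoC u)) q) <= Cmod (qpoch (qpow q (u, v)) q).
Proof.
  rewrite qpow_RtoC, <- (Cmod_qpow q u v).
  pose proof qpow_u_unit. apply Cmod_qpoch_ge; [lra |]. rewrite Cmod_qpow. lra.
Qed.

Lemma Cmod_Gamma_q_le v : Cmod (Gamma_q q (u, v)) <= Re (Gamma_q q (RtoC u)).
Proof.
  pose proof qpow_u_unit as Hx. set (x := exp (u * ln q)) in Hx |- *.
  set (L := Re (qpoch (RtoC x) q)). set (M := Re (qpoch (RtoC q) q)).
  set (c := exp ((1 - u) * ln (1 - q))).
  assert (HL : 0 < L) by (apply Re_qpoch_RtoC_pos; lra).
  assert (HM : 0 < M) by (apply Re_qpoch_RtoC_pos; lra).
  assert (HLeq : qpoch (RtoC x) q = RtoC L) by (apply qpoch_RtoC; lra).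
  assert (HMeq : qpoch (RtoC q) q = RtoC M) by (apply qpoch_RtoC; lra).
  assert (Hcm : L <= Cmod (qpoch (qpow q (u, v)) q)).
  { unfold L, x. rewrite <- qpow_RtoC. apply Re_qpoch_qpow_le_Cmod. }
  assert (Hre : Re (Gamma_q q (RtoC u)) = c * M / L).
  { unfold Gamma_q. rewrite qpow_RtoC. fold x. rewrite HLeq, HMeq.
    replace (Cmult (Cminus (RtoC 1) (RtoC u)) (RtoC (ln (1 - q))))
      with (RtoC ((1 - u) * ln (1 - q))) by (rewrite RtoC_mult, RtoC_minus; reflexivity).
    rewrite cexp_RtoC, <- RtoC_mult, <- RtoC_div by lra. reflexivity. }
  assert (Hnz : qpoch (qpow q (u, v)) q <> 0%C).
  { intros H0. rewrite H0, Cmod_0 in Hcm. lra. }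
  assert (Hmod : Cmod (Gamma_q q (u, v)) = c * M / Cmod (qpoch (qpow q (u, v)) q)).
  { unfold Gamma_q. rewrite HMeq, (Cmod_div _ _ Hnz), Cmod_mult, Cmod_cexp, Cmod_R.
    rewrite (Rabs_pos_eq M) by lra. unfold c. do 3 f_equal. simpl. ring. }
  rewrite Hre, Hmod. unfold Rdiv. apply Rmult_le_compat_l.
  - apply Rmult_le_pos; [left; apply exp_pos | lra].
  - now apply Rinv_le_contravar.
Qed.

End QGamma.

(** * The theta function on the imaginary axis *)

Lemma theta4_aux_shift v tau N k :
  theta4_aux v tau (S N) (S k)
  = (theta4_term v tau (- Z.of_nat (S N)) + theta4_aux v tau N k)%C.
Proof.
  induction k as [|k IH].
  - simpl. replace (0 - Z.pos (Pos.of_succ_nat N))%Z with (- Z.of_nat (S N))%Z by lia. ring.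
  - change (theta4_aux v tau (S N) (S (S k)))
      with (theta4_aux v tau (S N) (S k) + theta4_term v tau (Z.of_nat (S k) - Z.of_nat (S N)))%C.
    rewrite IH. simpl theta4_aux.
    replace (Z.of_nat (S k) - Z.of_nat (S N))%Z with (Z.of_nat k - Z.of_nat N)%Z by lia. ring.
Qed.

Lemma theta4_part_S v tau N :
  theta4_part v tau (S N)
  = (theta4_part v tau N
     + (theta4_term v tau (- Z.of_nat (S N)) + theta4_term v tau (Z.of_nat (S N))))%C.
Proof.
  unfold theta4_part. replace (2 * S N + 1)%nat with (S (S (2 * N + 1))) by lia.
  rewrite theta4_aux_shift.
  change (theta4_aux v tau N (S (2 * N + 1))) with
    (theta4_aux v tau N (2 * N + 1) + theta4_term v tau (Z.of_nat (2 * N + 1) - Z.of_nat N))%C.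
  replace (Z.of_nat (2 * N + 1) - Z.of_nat N)%Z with (Z.of_nat (S N)) by lia. ring.
Qed.

Lemma theta4_part_sum_n v tau N :
  theta4_part v tau N = sum_n (fun j => theta4_term v tau (Z.of_nat j - Z.of_nat N)) (2 * N).
Proof.
  unfold theta4_part. rewrite Nat.add_1_r. generalize (2 * N)%nat as k.
  induction k as [|k IH].
  - rewrite sum_O. simpl. ring.
  - rewrite sum_Sn, <- IH. reflexivity.
Qed.

Lemma theta4_term_imag u v n :
  theta4_term (RtoC v) (0, u) n
  = Cmult (RtoC (powerRZ (-1) n * exp (- PI * u * IZR n ^ 2))) (cexp (0, 2 * PI * v * IZR n)).
Proof.
  unfold theta4_term.
  replace (Cplus _ _) with (Cplus (RtoC (- PI * u * IZR n ^ 2)) (0, 2 * PI * v * IZR n)).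
  - rewrite cexp_add, cexp_RtoC, RtoC_mult. ring.
  - apply injective_projections; simpl; rewrite ?mult_IZR; ring.
Qed.

Lemma theta4_term_pair u v m :
  Cplus (theta4_term (RtoC v) (0, u) (- Z.of_nat m)) (theta4_term (RtoC v) (0, u) (Z.of_nat m))
  = RtoC (2 * ((-1) ^ m * exp (- PI * u * INR m ^ 2) * cos (2 * PI * v * INR m))).
Proof.
  rewrite !theta4_term_imag, opp_IZR, <- INR_IZR_INZ.
  replace (powerRZ (-1) (- Z.of_nat m)) with ((-1) ^ m).
  - rewrite <- pow_powerRZ.
    replace ((- INR m) ^ 2) with (INR m ^ 2) by ring.
    replace (2 * PI * v * - INR m) with (- (2 * PI * v * INR m)) by ring.
    unfold cexp, RtoC, Re, Im. simpl. rewrite exp_0, cos_neg, sin_neg.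
    apply injective_projections; simpl; ring.
  - rewrite <- (powerRZ_m1_add_even (- Z.of_nat m) m), pow_powerRZ. f_equal. lia.
Qed.

Lemma theta4_term_nat u v j N :
  theta4_term (RtoC v) (0, u) (Z.of_nat j - Z.of_nat N)
  = Cmult (Cmult (RtoC ((-1) ^ (j + N) * exp (- PI * u * (INR j - INR N) ^ 2)))
                 (cexp (0, 2 * PI * v) ^ j))
          (cexp (0, - (2 * PI * v)) ^ N).
Proof.
  rewrite theta4_term_imag, !cexp_pow, <- Cmult_assoc, <- cexp_add.
  replace (IZR (Z.of_nat j - Z.of_nat N)) with (INR j - INR N)
    by (rewrite minus_IZR, <- !INR_IZR_INZ; reflexivity).
  replace (powerRZ (-1) (Z.of_nat j - Z.of_nat N)) with ((-1) ^ (j + N)).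
  - do 2 f_equal. apply injective_projections; simpl; ring.
  - rewrite <- (powerRZ_m1_add_even (Z.of_nat j - Z.of_nat N) N), pow_powerRZ. f_equal. lia.
Qed.

Section CentralWeights.

Variable s : R.
Hypothesis hs : s < 0.

Let p := exp s.
Let Q := exp (2 * s).

Let p_unit : 0 < p < 1.
Proof. split; [apply exp_pos | rewrite <- exp_0; apply exp_increasing; lra]. Qed.

Let Q_sq : Q = p ^ 2.
Proof. unfold Q, p. rewrite exp_pow. f_equal. simpl. ring. Qed.

Let Q_unit : 0 <= Q < 1.
Proof. rewrite Q_sq. pose proof p_unit. split; nra. Qed.

Lemma central_weight_term_le N j : (j <= N)%nat ->
  Rabs (qbinom Q (2 * N) j / qbinom Q (2 * N) N - 1) * exp (s * (INR j - INR N) ^ 2)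
  <= p ^ N / (1 - Q) * p ^ j.
Proof.
  intros Hj. pose proof p_unit. pose proof Q_unit.
  pose proof (qbinom_central_ratio Q Q_unit N j Hj) as Hr.
  rewrite Rabs_minus_sym, Rabs_pos_eq by lra.
  replace ((INR j - INR N) ^ 2) with (INR (N - j) ^ 2) by (rewrite minus_INR by lia; ring).
  pose proof (exp_mult_sqr_le s (N - j) ltac:(lra)) as He. fold p in He.
  apply Rle_trans with (Q ^ S j / (1 - Q) * p ^ (N - j)).
  { apply Rmult_le_compat; try lra. left; apply exp_pos. }
  assert (Hpow : Q ^ S j * p ^ (N - j) <= p ^ N * p ^ j).
  { rewrite Q_sq, <- pow_mult, <- !pow_add. apply pow_antitone; [lra | lia]. }
  replace (p ^ N / (1 - Q) * p ^ j) with (p ^ N * p ^ j / (1 - Q)) by (field; lra).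
  replace (Q ^ S j / (1 - Q) * p ^ (N - j)) with (Q ^ S j * p ^ (N - j) / (1 - Q))
    by (field; lra).
  apply Rmult_le_compat_r; [apply Rlt_le, Rinv_0_lt_compat; lra | lra].
Qed.

Lemma central_weight_sum_le N :
  sum_n (fun j => Rabs (qbinom Q (2 * N) j / qbinom Q (2 * N) N - 1)
                  * exp (s * (INR j - INR N) ^ 2)) (2 * N)
  <= 2 / ((1 - Q) * (1 - p)) * p ^ N.
Proof.
  pose proof p_unit. pose proof Q_unit.
  set (b j := p ^ N / (1 - Q) * (p ^ j + p ^ (2 * N - j))).
  apply Rle_trans with (sum_n b (2 * N)).
  - apply sum_n_le_loc. intros j Hj. unfold b.
    pose proof (pow_le p j ltac:(lra)). pose proof (pow_le p (2 * N - j) ltac:(lra)).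
    assert (0 <= p ^ N / (1 - Q)) by (apply Rdiv_le_0_compat; [apply pow_le |]; lra).
    assert (Hb : p ^ N / (1 - Q) * p ^ j <= b j /\ p ^ N / (1 - Q) * p ^ (2 * N - j) <= b j)
      by (unfold b; split; apply Rmult_le_compat_l; lra).
    destruct (Nat.le_gt_cases j N) as [HjN | HjN].
    + eapply Rle_trans; [now apply central_weight_term_le | apply Hb].
    + eapply Rle_trans; [| apply Hb].
      rewrite <- (qbinom_sym Q (2 * N) j) by lia.
      replace ((INR j - INR N) ^ 2) with ((INR (2 * N - j) - INR N) ^ 2)
        by (rewrite minus_INR, mult_INR by lia; simpl; ring).
      apply central_weight_term_le. lia.
  - unfold b. rewrite sum_n_Rmult_l, sum_n_Rplus, <- sum_n_rev.
    pose proof (sum_n_geom_le p (2 * N) ltac:(lra)) as Hgeom.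
    change (sum_n (fun j => p ^ j) (2 * N)) with (sum_n (pow p) (2 * N)) in Hgeom.
    pose proof (pow_le p N ltac:(lra)).
    replace (2 / ((1 - Q) * (1 - p)) * p ^ N) with (p ^ N / (1 - Q) * (2 * / (1 - p)))
      by (field; lra).
    apply Rmult_le_compat_l; [apply Rdiv_le_0_compat; lra | lra].
Qed.

Lemma central_weight_lower_bound N :
  exp (- (p / ((1 - p) * (1 - Q)))) ^ 4 <= rqpoch p Q N ^ 2 / qbinom Q (2 * N) N.
Proof.
  pose proof p_unit. pose proof Q_unit.
  set (R := rqpoch p Q N). set (T := rqpoch Q Q N). set (c := exp (- (p / ((1 - p) * (1 - Q))))).
  assert (HcR : c <= R) by (apply rqpoch_ge_exp; lra).
  assert (HRT : R <= T).
  { apply rqpoch_antitone; [exact Q_unit | | lra]. rewrite Q_sq. split; [lra | nra]. }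
  assert (Hc : 0 < c) by apply exp_pos.
  assert (HG : 0 < qbinom Q (2 * N) N) by (apply qbinom_pos; [exact Q_unit | lia]).
  pose proof (qbinom_central_le Q Q_unit N) as HGT. fold T in HGT.
  assert (R ^ 2 * T ^ 2 <= R ^ 2 / qbinom Q (2 * N) N).
  { assert (T ^ 2 <= / qbinom Q (2 * N) N).
    { rewrite <- (Rinv_inv (T ^ 2)). now apply Rinv_le_contravar. }
    unfold Rdiv. apply Rmult_le_compat_l; [nra | assumption]. }
  assert (c ^ 4 <= R ^ 2 * T ^ 2).
  { replace (c ^ 4) with (c ^ 2 * c ^ 2) by ring.
    apply Rmult_le_compat; try (apply pow_le; lra); apply pow_incr; lra. }
  lra.
Qed.

End CentralWeights.

Section ThetaImaginaryAxis.

Variable u : R.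
Hypothesis hu : 0 < u.

Let s := - PI * u.
Let p := exp s.
Let Q := exp (2 * s).
Let K := 2 / ((1 - Q) * (1 - p)).
Let W N := rqpoch p Q N ^ 2 / qbinom Q (2 * N) N.

Let s_neg : s < 0.
Proof. unfold s. pose proof PI_RGT_0. nra. Qed.

Let p_unit : 0 < p < 1.
Proof. split; [apply exp_pos | rewrite <- exp_0; apply exp_increasing; lra]. Qed.

Let Q_unit : 0 <= Q < 1.
Proof. split; [left; apply exp_pos | rewrite <- exp_0; apply exp_increasing; lra]. Qed.

Lemma theta4_part_weighted v N :
  RtoC (Cmod (qpoch_part (RtoC p * cexp (0, 2 * PI * v)) Q N) ^ 2)
  = sum_n (fun j => RtoC (qbinom Q (2 * N) j)
                    * theta4_term (RtoC v) (0, u) (Z.of_nat j - Z.of_nat N))%C (2 * N).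
Proof.
  rewrite Cmod2_conj, qpoch_part_conj, Cmult_conj, Cconj_RtoC, Cconj_cexp_imag.
  unfold p, Q.
  rewrite <- (jacobi_triple_product_partial s _ _ N s_neg) by apply cexp_imag_mult_opp.
  apply sum_n_C_ext_loc. intros j Hj. rewrite theta4_term_nat.
  unfold s. rewrite RtoC_mult. ring.
Qed.

Lemma Cmod_theta4_term_nat v j N :
  Cmod (theta4_term (RtoC v) (0, u) (Z.of_nat j - Z.of_nat N)) = exp (s * (INR j - INR N) ^ 2).
Proof.
  rewrite theta4_term_nat, !Cmod_mult, !Cmod_pow, !Cmod_cexp_imag, !pow1, Cmod_R.
  rewrite Rabs_mult, pow_1_abs, Rabs_pos_eq by (left; apply exp_pos). unfold s. ring.
Qed.

Lemma theta4_part_approx v N :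
  Rabs (Cmod (qpoch_part (RtoC p * cexp (0, 2 * PI * v)) Q N) ^ 2 / qbinom Q (2 * N) N
        - Re (theta4_part (RtoC v) (0, u) N))
  <= K * p ^ N.
Proof.
  set (P := qpoch_part (RtoC p * cexp (0, 2 * PI * v)) Q N).
  set (G := qbinom Q (2 * N) N).
  assert (HG : 0 < G) by (apply qbinom_pos; [exact Q_unit | lia]).
  set (c j := theta4_term (RtoC v) (0, u) (Z.of_nat j - Z.of_nat N)).
  assert (Hdiff : (RtoC (Cmod P ^ 2 / G) - theta4_part (RtoC v) (0, u) N)%C
                  = sum_n (fun j => RtoC (qbinom Q (2 * N) j / G - 1) * c j)%C (2 * N)).
  { unfold Rdiv, P. rewrite RtoC_mult, theta4_part_weighted, theta4_part_sum_n, Cmult_comm.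
    rewrite <- sum_n_Cmult_l, <- sum_n_Cminus. apply sum_n_C_ext_loc. intros j Hj.
    unfold c. rewrite RtoC_minus, RtoC_mult. ring. }
  eapply Rle_trans; [| apply (central_weight_sum_le s s_neg N)].
  eapply Rle_trans; [| eapply Rle_trans; [apply Cmod_sum_n_le |]].
  - replace (_ - _) with (Re (RtoC (Cmod P ^ 2 / G) - theta4_part (RtoC v) (0, u) N)%C)
      by (unfold Re; simpl; ring).
    rewrite Hdiff. apply re_le_Cmod.
  - apply Req_le, sum_n_ext. intros j. unfold c.
    rewrite Cmod_mult, Cmod_R, Cmod_theta4_term_nat. reflexivity.
Qed.

Lemma theta4_part_S_real v N :
  theta4_part (RtoC v) (0, u) (S N)
  = Cplus (theta4_part (RtoC v) (0, u) N)
      (RtoC (2 * ((-1) ^ S N * exp (s * INR (S N) ^ 2) * cos (2 * PI * v * INR (S N))))).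
Proof. now rewrite theta4_part_S, theta4_term_pair. Qed.

Lemma Im_theta4_part v N : Im (theta4_part (RtoC v) (0, u) N) = 0.
Proof.
  induction N as [|N IH].
  - unfold theta4_part. simpl theta4_aux. rewrite theta4_term_imag.
    unfold cexp, Re, Im. simpl. rewrite Rmult_0_r, sin_0. ring.
  - rewrite theta4_part_S_real. unfold Im in *. simpl. rewrite IH. ring.
Qed.

Lemma Re_theta4_part_increment v N :
  Rabs (Re (theta4_part (RtoC v) (0, u) (S N)) - Re (theta4_part (RtoC v) (0, u) N))
  <= 2 * p ^ N.
Proof.
  set (t := 2 * PI * v * INR (S N)). set (e := exp (s * INR (S N) ^ 2)).
  rewrite theta4_part_S_real. fold t e.
  replace (Re _ - _) with (2 * e * ((-1) ^ S N * cos t)) by (unfold Re; simpl; ring).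
  assert (Hsc : Rabs ((-1) ^ S N * cos t) <= 1).
  { rewrite Rabs_mult, pow_1_abs, Rmult_1_l. apply Rabs_le, COS_bound. }
  assert (He : e <= p ^ N).
  { eapply Rle_trans; [apply exp_mult_sqr_le; lra |]. apply pow_antitone; [lra | lia]. }
  assert (0 < e) by apply exp_pos.
  rewrite Rabs_mult, (Rabs_pos_eq (2 * e)) by lra. nra.
Qed.

Lemma theta4_imag_axis_cvg v :
  exists l : R, is_lim_seq (fun N => Re (theta4_part (RtoC v) (0, u) N)) l
                /\ theta4 (RtoC v) (0, u) = RtoC l.
Proof.
  destruct (ex_lim_seq_geometric_increments _ 2 p ltac:(lra) (Re_theta4_part_increment v))
    as [l Hl].
  exists l. split; [exact Hl |]. unfold theta4. apply Clim_correct; [exact Hl |].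
  eapply is_lim_seq_ext; [| apply is_lim_seq_const]. intros N. symmetry. apply Im_theta4_part.
Qed.

Lemma Re_theta4_part_ge v N : W N - K * p ^ N <= Re (theta4_part (RtoC v) (0, u) N).
Proof.
  pose proof (theta4_part_approx v N) as Happrox.
  set (a := Cmult (RtoC p) (cexp (0, 2 * PI * v))) in Happrox.
  assert (Ha : Cmod a = p).
  { unfold a. rewrite Cmod_mult, Cmod_cexp_imag, Cmod_R, Rabs_pos_eq; lra. }
  assert (HP : rqpoch p Q N <= Cmod (qpoch_part a Q N)).
  { rewrite <- Ha at 1. apply Cmod_qpoch_part_ge; [exact Q_unit | lra]. }
  assert (HW : W N <= Cmod (qpoch_part a Q N) ^ 2 / qbinom Q (2 * N) N).
  { unfold W, Rdiv. apply Rmult_le_compat_r.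
    - apply Rlt_le, Rinv_0_lt_compat, qbinom_pos; [exact Q_unit | lia].
    - apply pow_incr. split; [apply rqpoch_unit_interval; lra | exact HP]. }
  apply Rabs_le_between in Happrox. lra.
Qed.

Lemma Re_theta4_part_0_le N : Re (theta4_part (RtoC 0) (0, u) N) <= W N + K * p ^ N.
Proof.
  pose proof (theta4_part_approx 0 N) as Happrox.
  replace (cexp (0, 2 * PI * 0)) with (RtoC 1) in Happrox
    by (replace (2 * PI * 0) with 0 by ring; now rewrite <- exp_0, <- cexp_RtoC).
  rewrite Cmult_1_r, qpoch_part_RtoC, Cmod_R, (Rabs_pos_eq (rqpoch p Q N)) in Happrox
    by (apply rqpoch_unit_interval; lra).
  apply Rabs_le_between in Happrox. unfold W. lra.
Qed.

Lemma theta4_ratio_imag_axis v :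
  Im (Cdiv (theta4 (RtoC v) (0, u)) (theta4 (RtoC 0) (0, u))) = 0
  /\ 1 <= Re (Cdiv (theta4 (RtoC v) (0, u)) (theta4 (RtoC 0) (0, u))).
Proof.
  destruct (theta4_imag_axis_cvg v) as [lv [Hlv ->]].
  destruct (theta4_imag_axis_cvg 0) as [l0 [Hl0 ->]].
  assert (HK : is_lim_seq (fun N => K * p ^ N) 0).
  { replace (Finite 0) with (Rbar_mult K 0) by (simpl; f_equal; ring).
    apply is_lim_seq_scal_l, is_lim_seq_geom. rewrite Rabs_pos_eq; lra. }
  assert (Hle : l0 <= lv).
  { assert (Hlim : is_lim_seq (fun N => Re (theta4_part (RtoC 0) (0, u) N) - 2 * (K * p ^ N))
                              (l0 - 2 * 0)).
    { apply is_lim_seq_minus'; [exact Hl0 |].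
      replace (Finite (2 * 0)) with (Rbar_mult 2 0) by (simpl; f_equal; ring).
      now apply is_lim_seq_scal_l. }
    assert (Hpt : forall N, Re (theta4_part (RtoC 0) (0, u) N) - 2 * (K * p ^ N)
                            <= Re (theta4_part (RtoC v) (0, u) N)).
    { intros N. pose proof (Re_theta4_part_ge v N). pose proof (Re_theta4_part_0_le N). lra. }
    pose proof (is_lim_seq_le _ _ _ _ Hpt Hlim Hlv) as H. simpl in H. lra. }
  assert (Hpos : 0 < l0).
  { set (c := exp (- (p / ((1 - p) * (1 - Q))))).
    assert (Hpt : forall N, c ^ 4 - K * p ^ N <= Re (theta4_part (RtoC 0) (0, u) N)).
    { intros N. pose proof (central_weight_lower_bound s s_neg N) as Hc. fold p Q c in Hc.
      pose proof (Re_theta4_part_ge 0 N). unfold W in *. lra. }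
    assert (Hlim : is_lim_seq (fun N => c ^ 4 - K * p ^ N) (c ^ 4 - 0))
      by (apply is_lim_seq_minus'; [apply is_lim_seq_const | exact HK]).
    pose proof (is_lim_seq_le _ _ _ _ Hpt Hlim Hl0) as H. simpl in H.
    pose proof (pow_lt c 4 (exp_pos _)). lra. }
  rewrite <- RtoC_div by lra. simpl. split; [reflexivity |].
  apply Rmult_le_reg_r with l0; [exact Hpos |]. unfold Rdiv.
  rewrite Rmult_assoc, Rinv_l, Rmult_1_r; lra.
Qed.

End ThetaImaginaryAxis.

Theorem corollary2p2 (q u v : R) (hq0 : 0 < q) (hq1 : q < 1) (hu : 0 < u) :
  Cmod (qpoch (qpow q (u, v)) q) >= Re (qpoch (qpow q (RtoC u)) q) * Rpower q (v ^ 2 / 4)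
  /\ Re (Gamma_q q (RtoC u)) >= Cmod (Gamma_q q (u, v)) * Rpower q (v ^ 2 / 4)
  /\ Im (Cdiv (theta4 (RtoC v) (0, u)) (theta4 (RtoC 0) (0, u))) = 0
  /\ Re (Cdiv (theta4 (RtoC v) (0, u)) (theta4 (RtoC 0) (0, u))) >= exp (- PI * v ^ 2 / u).
Proof.
  assert (Hq : 0 < q < 1) by lra.
  assert (Hpow : 0 <= Rpower q (v ^ 2 / 4) <= 1).
  { split; [left; apply exp_pos |]. rewrite <- exp_0. apply exp_monotone.
    assert (ln q < 0) by (rewrite <- ln_1; apply ln_increasing; lra).
    assert (0 <= v ^ 2 / 4) by (apply Rdiv_le_0_compat; [apply pow2_ge_0 | lra]). nra. }
  assert (Hgauss : exp (- PI * v ^ 2 / u) <= 1).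
  { rewrite <- exp_0. apply exp_monotone. pose proof PI_RGT_0.
    assert (0 <= PI * v ^ 2 / u)
      by (apply Rdiv_le_0_compat; [pose proof (pow2_ge_0 v); nra | lra]).
    unfold Rdiv in *. lra. }
  pose proof (Re_qpoch_qpow_le_Cmod q u Hq hu v) as Hpoch.
  pose proof (Cmod_Gamma_q_le q u Hq hu v) as Hgamma.
  pose proof (Cmod_ge_0 (qpoch (qpow q (u, v)) q)).
  pose proof (Cmod_ge_0 (Gamma_q q (u, v))).
  destruct (theta4_ratio_imag_axis u hu v) as [Him Hre].
  repeat split; [nra | nra | exact Him | lra].
Qed.
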